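(* There are exactly $15$ complete number-conserving $3$-state $3$-neighbor vector-valued fuzzy cellular automaton rules, i.e. exactly 15 local rules $f$ for which $\nu^t(k)$ is an additive conserved quantity for every $k=1,2,3$. Their local rules $f(\bm{x},\bm{y},\bm{z})$ are: $(y_1,y_2,y_3)^\top$; $(z_1,z_2,z_3)^\top$; $(x_1,x_2,x_3)^\top$; $(x_1y_2+y_1z_1+y_1z_3,\ x_2y_2+x_3y_2+y_1z_2,\ y_3)^\top$; $(x_1y_3+y_1z_1+y_1z_2,\ y_2,\ x_2y_3+x_3y_3+y_1z_3)^\top$; $(y_1,\ x_2y_3+y_2z_1+y_2z_2,\ x_1y_3+x_3y_3+y_2z_3)^\top$; $(y_1,\ x_1y_2+x_2y_2+y_3z_2,\ x_3y_2+y_3z_1+y_3z_3)^\top$; $(x_1y_1+x_2y_1+y_3z_1,\ y_2,\ x_3y_1+y_3z_2+y_3z_3)^\top$; $(x_1y_1+x_3y_1+y_2z_1,\ x_2y_1+y_2z_2+y_2z_3,\ y_3)^\top$; $(x_1y_2+x_1y_3+y_1z_1,\ x_2y_2+x_3y_2+y_1z_2,\ x_2y_3+x_3y_3+y_1z_3)^\top$; $(x_1y_2+y_1z_1+y_1z_3,\ x_2y_2+y_1z_2+y_3z_2,\ x_3y_2+y_3z_1+y_3z_3)^\top$; $(x_1y_3+y_1z_1+y_1z_2,\ x_2y_3+y_2z_1+y_2z_2,\ x_3y_3+y_1z_3+y_2z_3)^\top$; $(x_1y_1+x_2y_1+y_3z_1,\ x_1y_2+x_2y_2+y_3z_2,\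 x_3y_1+x_3y_2+y_3z_3)^\top$; $(x_1y_1+x_3y_1+y_2z_1,\ x_2y_1+x_2y_3+y_2z_2,\ x_1y_3+x_3y_3+y_2z_3)^\top$; $(x_1y_1+y_2z_1+y_3z_1,\ x_2y_1+y_2z_2+y_2z_3,\ x_3y_1+y_3z_2+y_3z_3)^\top$.
   Context: Let $\bm{e}_1,\bm{e}_2,\bm{e}_3$ be the standard basis of $\mathbb{R}^3$ and $\Delta=\{(x_1,x_2,x_3)^{\top}\mid x_1+x_2+x_3=1,\ x_i\ge0\}$. A $3$-state $3$-neighbor vector-valued fuzzy cellular automaton ($3$-VFCA) has cells $i\in\mathbb{Z}$ with states $\bm{x}_i^t\in\Delta$, $t\in\mathbb{Z}_{\ge0}$, evolving by $\bm{x}_i^{t+1}=f(\bm{x}_{i-1}^t,\bm{x}_i^t,\bm{x}_{i+1}^t)$, where the local rule has the form $f(\bm{x},\bm{y},\bm{z})=\sum_{j,k,\ell=1}^3x_jy_kz_\ell\,h(\bm{e}_j,\bm{e}_k,\bm{e}_\ell)$ for some map $h:\{\bm{e}_1,\bm{e}_2,\bm{e}_3\}^3\to\{\bm{e}_1,\bm{e}_2,\bm{e}_3\}$ (so rules are in bijection with such $h$; here $\bm{x}=(x_1,x_2,x_3)^\top$ etc.). Consider $L$-periodic configurations ($\bm{x}_i^t=\bm{x}_{i+L}^t$, $L$ a positive integer) and $\nu^t(k)=\sum_{i=1}^L[\bm{x}_i^t]_k$, where $[\bm{x}]_k$ is the $k$th entry. $\nu^t(k)$ is an additive conserved quantity if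 $\nu^{t+1}(k)=\nu^t(k)$ for all $t$ and every periodic initial configuration in $\Delta$ (of every period $L$). A rule is complete number-conserving if this holds for all $k=1,2,3$. *)

From HB Require Import structures.
From mathcomp Require Import all_boot all_order all_algebra.
From mathcomp Require Import reals.
Set Implicit Arguments. Unset Strict Implicit. Unset Printing Implicit Defensive.
Import Order.TTheory GRing.Theory Num.Theory.
Local Open Scope ring_scope.

Section VFCA.
Variable R : realType.

(* states are column vectors in R^3; [x]_k (k = 1,2,3) is  co x (k-1) *)
Definition co (x : 'cV[R]_3) (i : nat) : R := x (inord i) 0.

Definition in_simplex (x : 'cV[R]_3) : Prop :=
  (\sum_(k < 3) x k 0 = 1) /\ (forall k : 'I_3, 0 <= x k 0).

Definition e (j : 'I_3) : 'cV[R]_3 := delta_mx j 0.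

(* A rule is a map h : {e1,e2,e3}^3 -> {e1,e2,e3}; basis vectors are
   represented by their indices. *)
Definition rule := {ffun 'I_3 * 'I_3 * 'I_3 -> 'I_3}.

Definition local (h : rule) (x y z : 'cV[R]_3) : 'cV[R]_3 :=
  \sum_(j < 3) \sum_(k < 3) \sum_(l < 3)
     (x j 0 * y k 0 * z l 0) *: e (h (j, k, l)).

Definition config := int -> 'cV[R]_3.

Definition step (h : rule) (c : config) : config :=
  fun i => local h (c (i - 1)) (c i) (c (i + 1)).

Definition evol (h : rule) (t : nat) (c : config) : config := iter t (step h) c.

Definition nu (L : nat) (c : config) (k : 'I_3) : R :=
  \sum_(1 <= i < L.+1) c (Posz i) k 0.

Definition additive_conserved (h : rule) (k : 'I_3) : Prop :=
  forall (L : nat), (0 < L)%N ->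
  forall c : config,
    (forall i : int, c (i + Posz L) = c i) ->
    (forall i : int, in_simplex (c i)) ->
    forall t : nat, nu L (evol h t.+1 c) k = nu L (evol h t c) k.

Definition complete_number_conserving (h : rule) : Prop :=
  forall k : 'I_3, additive_conserved h k.

Definition vec3 (a b c : R) : 'cV[R]_3 := \col_(i < 3) [:: a; b; c]`_i.

(* the 15 local rules listed in the theorem, indexed 0..14 *)
Definition listed (n : nat) (x y z : 'cV[R]_3) : 'cV[R]_3 :=
  let x1 := co x 0 in let x2 := co x 1 in let x3 := co x 2 in
  let y1 := co y 0 in let y2 := co y 1 in let y3 := co y 2 in
  let z1 := co z 0 in let z2 := co z 1 in let z3 := co z 2 in
  match n with
  | 0 => vec3 y1 y2 y3
  | 1 => vec3 z1 z2 z3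
  | 2 => vec3 x1 x2 x3
  | 3 => vec3 (x1*y2 + y1*z1 + y1*z3) (x2*y2 + x3*y2 + y1*z2) y3
  | 4 => vec3 (x1*y3 + y1*z1 + y1*z2) y2 (x2*y3 + x3*y3 + y1*z3)
  | 5 => vec3 y1 (x2*y3 + y2*z1 + y2*z2) (x1*y3 + x3*y3 + y2*z3)
  | 6 => vec3 y1 (x1*y2 + x2*y2 + y3*z2) (x3*y2 + y3*z1 + y3*z3)
  | 7 => vec3 (x1*y1 + x2*y1 + y3*z1) y2 (x3*y1 + y3*z2 + y3*z3)
  | 8 => vec3 (x1*y1 + x3*y1 + y2*z1) (x2*y1 + y2*z2 + y2*z3) y3
  | 9 => vec3 (x1*y2 + x1*y3 + y1*z1) (x2*y2 + x3*y2 + y1*z2) (x2*y3 + x3*y3 + y1*z3)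
  | 10 => vec3 (x1*y2 + y1*z1 + y1*z3) (x2*y2 + y1*z2 + y3*z2) (x3*y2 + y3*z1 + y3*z3)
  | 11 => vec3 (x1*y3 + y1*z1 + y1*z2) (x2*y3 + y2*z1 + y2*z2) (x3*y3 + y1*z3 + y2*z3)
  | 12 => vec3 (x1*y1 + x2*y1 + y3*z1) (x1*y2 + x2*y2 + y3*z2) (x3*y1 + x3*y2 + y3*z3)
  | 13 => vec3 (x1*y1 + x3*y1 + y2*z1) (x2*y1 + x2*y3 + y2*z2) (x1*y3 + x3*y3 + y2*z3)
  | _ => vec3 (x1*y1 + y2*z1 + y3*z1) (x2*y1 + y2*z2 + y2*z3) (x3*y1 + y3*z2 + y3*z3)
  end.

Definition rule_is (h : rule) (F : 'cV[R]_3 -> 'cV[R]_3 -> 'cV[R]_3 -> 'cV[R]_3) : Prop :=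
  forall x y z, in_simplex x -> in_simplex y -> in_simplex z -> local h x y z = F x y z.

End VFCA.

From HB Require Import structures.
From mathcomp Require Import all_boot all_order all_algebra.
From mathcomp Require Import reals.
From mathcomp Require Import ring lra.
Import Order.TTheory GRing.Theory Num.Theory.
Set Implicit Arguments. Unset Strict Implicit. Unset Printing Implicit Defensive.

(* Testing conservation on the 5-periodic configurations of basis vectors
   e_a e_b e_c e_1 e_1 yields, for every letter m, a balance identity: the five
   windows of the cyclic word a b c 1 1 produce m as often as the word contains m.
   These identities are also sufficient: they write the indicator of
   h(e_j, e_k, e_l) = e_m as [k = m] + J(j, k) - J(k, l), this decomposition
   extends multilinearly to the simplex, and the flux J telescopes over a period.
   Each identity determines the window a b c from the four others, so a balanced
   rule is determined by its values h(e_1, ., .), where moreover h(e_1, e_1, e_1)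
   = e_1; enumerating the remaining 3^8 choices leaves exactly the 15 listed rules. *)

Section SumLemmas.
Local Open Scope ring_scope.
Variables (K : comPzRingType) (I : finType).

Lemma sum_mul_delta (f : I -> K) (j : I) : \sum_i f i * (i == j)%:R = f j.
Proof.
rewrite (bigD1 j) //= eqxx mulr1 big1 ?addr0 // => i /negbTE ->.
by rewrite mulr0.
Qed.

Lemma sum_trilinear_flux (x y z d : I -> K) (J : I -> I -> K) :
  \sum_i x i = 1 -> \sum_i z i = 1 ->
  \sum_i \sum_j \sum_k x i * y j * z k * (d j + J i j - J j k) =
  \sum_j y j * d j + \sum_i \sum_j x i * y j * J i j - \sum_j \sum_k y j * z k * J j k.
Proof.
move=> sx sz.
have inner i j : \sum_k x i * y j * z k * (d j + J i j - J j k) =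
    x i * (y j * d j) + x i * y j * J i j - x i * \sum_k y j * z k * J j k.
  rewrite -[_ + _ * J i j]mulr1 -sz mulr_sumr mulr_sumr -sumrB.
  by apply: eq_bigr => k _; ring.
under eq_bigr do rewrite (eq_bigr _ (fun j _ => inner _ j)) sumrB big_split -!mulr_sumr.
by rewrite sumrB big_split -!mulr_suml sx !mul1r.
Qed.

Lemma sum_delta_mul (f : I -> K) (j : I) : \sum_i (i == j)%:R * f i = f j.
Proof. by under eq_bigr do rewrite mulrC; apply: sum_mul_delta. Qed.

Lemma sum3_mul (x y z : I -> K) (F : I -> I -> I -> K) :
  \sum_i \sum_j \sum_k x i * y j * z k * F i j k =
  \sum_i x i * \sum_j y j * \sum_k z k * F i j k.
Proof.
apply: eq_bigr => i _; rewrite mulr_sumr; apply: eq_bigr => j _.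
by rewrite !mulr_sumr; apply: eq_bigr => k _; rewrite !mulrA.
Qed.

End SumLemmas.

(** * Balance identities *)

Definition cells := iota 0 3.

Lemma mem_cells x : (x \in cells) = (x < 3).
Proof. by rewrite mem_iota. Qed.

(* Letters are 0-based (0 stands for e_1); the left side counts the letter [m]
   among the images of the five windows of the cyclic word [a b c 0 0]. *)
Definition balanced_at (H : nat -> nat -> nat -> nat) (a b c m : nat) : bool :=
  (H a b c == m) + (H b c 0 == m) + (H c 0 0 == m) + (H 0 0 a == m) + (H 0 a b == m)
  == (a == m) + (b == m) + (c == m) + (0 == m) + (0 == m).

Definition balanced (H : nat -> nat -> nat -> nat) : bool :=
  all (fun a => all (fun b => all (fun c => all (balanced_at H a b c) cells) cells) cells) cells.

Lemma balancedP H :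
  reflect (forall a b c m, a < 3 -> b < 3 -> c < 3 -> m < 3 -> balanced_at H a b c m)
          (balanced H).
Proof.
apply: (iffP allP) => [hB a b c m | hB a].
  rewrite -!mem_cells => /hB/allP/(_ b) hb /hb/allP/(_ c) hc /hc/allP; exact.
rewrite mem_cells => ha; apply/allP => b; rewrite mem_cells => hb.
apply/allP => c; rewrite mem_cells => hc; apply/allP => m; rewrite mem_cells.
exact: hB.
Qed.

Lemma eq_balanced H1 H2 :
  (forall a b c, a < 3 -> b < 3 -> c < 3 -> H1 a b c = H2 a b c) ->
  balanced H1 = balanced H2.
Proof.
move=> E; apply/balancedP/balancedP => hB a b c m ha hb hc hm;
  move: (hB a b c m ha hb hc hm); by rewrite /balanced_at ?E // -?E.
Qed.

Lemma balanced_quiescent H : balanced H -> H 0 0 0 = 0.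
Proof.
move=> /balancedP/(_ 0 0 0 0 isT isT isT isT).
by rewrite /balanced_at; case: (H 0 0 0 =P 0).
Qed.

Definition entry (t : seq nat) (a b c : nat) : nat := nth 0 t (a * 9 + b * 3 + c).

Definition tabulate (H : nat -> nat -> nat -> nat) : seq nat :=
  [seq H (i %/ 9) (i %/ 3 %% 3) (i %% 3) | i <- iota 0 27].

Lemma entry_tabulate H a b c : a < 3 -> b < 3 -> c < 3 -> entry (tabulate H) a b c = H a b c.
Proof. by case: a => [|[|[|]]] // _; case: b => [|[|[|]]] // _; case: c => [|[|[|]]]. Qed.

Lemma eq_tabulate H1 H2 :
  (forall a b c, a < 3 -> b < 3 -> c < 3 -> H1 a b c = H2 a b c) ->
  tabulate H1 = tabulate H2.
Proof.
move=> E; apply/eq_in_map => i; rewrite mem_iota add0n => hi.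
by apply: E; rewrite ?ltn_pmod // ltn_divLR.
Qed.

Lemma balanced_tabulate H : balanced (entry (tabulate H)) = balanced H.
Proof. exact/eq_balanced/entry_tabulate. Qed.

Definition missing_letter (known total : nat -> nat) : nat :=
  if total 0 == (known 0).+1 then 0 else if total 1 == (known 1).+1 then 1 else 2.

Lemma missing_letterE known total v : v < 3 ->
  (forall k, k < 3 -> (v == k) + known k = total k) -> missing_letter known total = v.
Proof.
move=> + E; rewrite /missing_letter -!E //.
by case: v {E} => [|[|[|]]] // _; rewrite /= ?add0n ?add1n ?(ltn_eqF (ltnSn _)) ?eqxx.
Qed.

Definition solve_window (G : nat -> nat -> nat -> nat) (a b c : nat) : nat :=
  missing_letter
    (fun m => (G b c 0 == m) + (G c 0 0 == m) + (G 0 0 a == m) + (G 0 a b == m))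
    (fun m => (a == m) + (b == m) + (c == m) + (0 == m) + (0 == m)).

Lemma solve_windowE H G a b c : balanced H -> a < 3 -> b < 3 -> c < 3 -> H a b c < 3 ->
  G b c 0 = H b c 0 -> G c 0 0 = H c 0 0 -> G 0 0 a = H 0 0 a -> G 0 a b = H 0 a b ->
  solve_window G a b c = H a b c.
Proof.
move=> /balancedP hB ha hb hc hR E1 E2 E3 E4; apply: missing_letterE => // m hm.
by rewrite E1 E2 E3 E4 !addnA; apply/eqP/hB.
Qed.

(* [rebuild G0] recovers a balanced rule from its values [G0 0 b c] by solving
   the windows [a 0 0], then [a b 0], then [a b c], each from windows known before. *)
Definition patch (P : nat -> nat -> bool) (G : nat -> nat -> nat -> nat) :=
  entry (tabulate (fun a b c => if P b c then solve_window G a b c else G a b c)).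

Definition rebuild (G0 : nat -> nat -> nat -> nat) : nat -> nat -> nat -> nat :=
  solve_window (patch (fun _ c => c == 0) (patch (fun b c => (b == 0) && (c == 0)) G0)).

Lemma rebuildE H G0 a b c : balanced H ->
  (forall a b c, a < 3 -> b < 3 -> c < 3 -> H a b c < 3) ->
  (forall b c, b < 3 -> c < 3 -> G0 0 b c = H 0 b c) ->
  a < 3 -> b < 3 -> c < 3 -> rebuild G0 a b c = H a b c.
Proof.
move=> hB hR hG0 ha hb hc; rewrite /rebuild.
set G1 := patch _ G0; set G2 := patch _ G1.
have hG1 x y z : x < 3 -> y < 3 -> z < 3 -> (x == 0) || (y == 0) && (z == 0) ->
    G1 x y z = H x y z.
  move=> hx hy hz; rewrite /G1 /patch entry_tabulate //.
  case: ifP => [/andP[/eqP-> /eqP->] _ | _]; last by rewrite orbF => /eqP->; apply: hG0.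
  by apply: solve_windowE; rewrite ?hG0 ?hR.
have hG2 x y z : x < 3 -> y < 3 -> z < 3 -> (x == 0) || (z == 0) -> G2 x y z = H x y z.
  move=> hx hy hz; rewrite /G2 /patch entry_tabulate //.
  case: ifP => [/eqP-> _ | _]; last by rewrite orbF => hx0; apply: hG1; rewrite ?hx0.
  by apply: solve_windowE; rewrite ?hG1 ?hR ?eqxx ?orbT.
by apply: solve_windowE; rewrite ?hG2 ?hR ?eqxx ?orbT.
Qed.

Fixpoint words (n : nat) : seq (seq nat) :=
  if n is n'.+1 then [seq x :: w | x <- cells, w <- words n'] else [:: [::]].

Lemma mem_words w : all (fun x => x < 3) w -> w \in words (size w).
Proof.
elim: w => [|x w IH] // /andP[hx /IH w_in].
have := @allpairs_f_dep _ (fun=> _) _ (fun x w => x :: w) cells (fun=> words (size w)) x w.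
by rewrite mem_cells => /(_ hx w_in).
Qed.

(* The 15 rules of the theorem, in the order of [listed]. *)
Definition tables : seq (seq nat) := [::
  [::0; 0; 0; 1; 1; 1; 2; 2; 2; 0; 0; 0; 1; 1; 1; 2; 2; 2; 0; 0; 0; 1; 1; 1; 2; 2; 2];
  [::0; 1; 2; 0; 1; 2; 0; 1; 2; 0; 1; 2; 0; 1; 2; 0; 1; 2; 0; 1; 2; 0; 1; 2; 0; 1; 2];
  [::0; 0; 0; 0; 0; 0; 0; 0; 0; 1; 1; 1; 1; 1; 1; 1; 1; 1; 2; 2; 2; 2; 2; 2; 2; 2; 2];
  [::0; 1; 0; 0; 0; 0; 2; 2; 2; 0; 1; 0; 1; 1; 1; 2; 2; 2; 0; 1; 0; 1; 1; 1; 2; 2; 2];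
  [::0; 0; 2; 1; 1; 1; 0; 0; 0; 0; 0; 2; 1; 1; 1; 2; 2; 2; 0; 0; 2; 1; 1; 1; 2; 2; 2];
  [::0; 0; 0; 1; 1; 2; 2; 2; 2; 0; 0; 0; 1; 1; 2; 1; 1; 1; 0; 0; 0; 1; 1; 2; 2; 2; 2];
  [::0; 0; 0; 1; 1; 1; 2; 1; 2; 0; 0; 0; 1; 1; 1; 2; 1; 2; 0; 0; 0; 2; 2; 2; 2; 1; 2];
  [::0; 0; 0; 1; 1; 1; 0; 2; 2; 0; 0; 0; 1; 1; 1; 0; 2; 2; 2; 2; 2; 1; 1; 1; 0; 2; 2];
  [::0; 0; 0; 0; 1; 1; 2; 2; 2; 1; 1; 1; 0; 1; 1; 2; 2; 2; 0; 0; 0; 0; 1; 1; 2; 2; 2];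
  [::0; 1; 2; 0; 0; 0; 0; 0; 0; 0; 1; 2; 1; 1; 1; 2; 2; 2; 0; 1; 2; 1; 1; 1; 2; 2; 2];
  [::0; 1; 0; 0; 0; 0; 2; 1; 2; 0; 1; 0; 1; 1; 1; 2; 1; 2; 0; 1; 0; 2; 2; 2; 2; 1; 2];
  [::0; 0; 2; 1; 1; 2; 0; 0; 0; 0; 0; 2; 1; 1; 2; 1; 1; 1; 0; 0; 2; 1; 1; 2; 2; 2; 2];
  [::0; 0; 0; 1; 1; 1; 0; 1; 2; 0; 0; 0; 1; 1; 1; 0; 1; 2; 2; 2; 2; 2; 2; 2; 0; 1; 2];
  [::0; 0; 0; 0; 1; 2; 2; 2; 2; 1; 1; 1; 0; 1; 2; 1; 1; 1; 0; 0; 0; 0; 1; 2; 2; 2; 2];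
  [::0; 0; 0; 0; 1; 1; 0; 2; 2; 1; 1; 1; 0; 1; 1; 0; 2; 2; 2; 2; 2; 0; 1; 1; 0; 2; 2]].

Lemma size_tables : size tables = 15.
Proof. by []. Qed.

Lemma uniq_tables : uniq tables.
Proof. by []. Qed.

Lemma tables_wf t : t \in tables -> all (fun v => v < 3) t && (tabulate (entry t) == t).
Proof. by move: t; apply/allP. Qed.

Lemma tables_balanced t : t \in tables -> balanced (entry t).
Proof. by move: t; apply/allP; vm_compute. Qed.

(* [w] ranges over the values [H 0 b c] other than [H 0 0 0], which is 0. *)
Lemma rebuild_enumeration :
  all (fun w => balanced (entry (tabulate (rebuild (entry (0 :: w))))) ==>
                (tabulate (rebuild (entry (0 :: w))) \in tables)) (words 8).
Proof. by vm_compute. Qed.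

Lemma balanced_tabulate_mem H : (forall a b c, a < 3 -> b < 3 -> c < 3 -> H a b c < 3) ->
  balanced H -> tabulate H \in tables.
Proof.
move=> hR hB; pose w := [seq H 0 (i %/ 3) (i %% 3) | i <- iota 1 8].
have w_in : w \in words 8.
  have <- : size w = 8 by rewrite size_map size_iota.
  apply/mem_words/allP => v /mapP[i]; rewrite mem_iota => /andP[_ hi] ->.
  by apply: hR; rewrite ?ltn_pmod // ltn_divLR.
have hG0 b c : b < 3 -> c < 3 -> entry (0 :: w) 0 b c = H 0 b c.
  by case: b => [|[|[|]]] // _; case: c => [|[|[|]]] // _; rewrite (balanced_quiescent hB).
have tabE : tabulate H = tabulate (rebuild (entry (0 :: w))).
  by apply: eq_tabulate => a b c ha hb hc; rewrite (rebuildE hB hR hG0).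
have := allP rebuild_enumeration w w_in.
by rewrite -tabE balanced_tabulate hB.
Qed.

(** * Rules as tables *)

Definition natrule (h : rule) (a b c : nat) : nat := h (inord a, inord b, inord c).

Definition table (h : rule) : seq nat := tabulate (natrule h).

Definition rule_of_table (t : seq nat) : rule :=
  [ffun p : 'I_3 * 'I_3 * 'I_3 => inord (entry t p.1.1 p.1.2 p.2)].

Lemma natruleE h (j k l : 'I_3) : natrule h j k l = h (j, k, l).
Proof. by rewrite /natrule !inord_val. Qed.

Lemma natrule_eq (h : rule) (j k l m : 'I_3) : (h (j, k, l) == m) = (natrule h j k l == m).
Proof. by rewrite natruleE. Qed.

Lemma natrule_lt3 h a b c : natrule h a b c < 3.
Proof. exact: ltn_ord. Qed.

Lemma tableK : cancel table rule_of_table.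
Proof.
move=> h; apply/ffunP => -[[j k] l]; rewrite ffunE /= /table entry_tabulate //.
by rewrite natruleE inord_val.
Qed.

Lemma natrule_of_table t : all (fun v => v < 3) t ->
  forall a b c, a < 3 -> b < 3 -> c < 3 -> natrule (rule_of_table t) a b c = entry t a b c.
Proof.
move=> /all_nthP ht a b c ha hb hc; rewrite /natrule ffunE /= !inordK //.
rewrite /entry; case: (ltnP (a * 9 + b * 3 + c) (size t)) => [/ht | hs]; first exact.
by rewrite nth_default.
Qed.

Lemma rule_of_tableK t : t \in tables -> table (rule_of_table t) = t.
Proof.
move=> /tables_wf /andP[ht /eqP tE]; rewrite -[RHS]tE /table.
exact/eq_tabulate/natrule_of_table.
Qed.

Lemma balanced_table_mem h : balanced (natrule h) -> table h \in tables.
Proof. by apply: balanced_tabulate_mem => a b c _ _ _; apply: natrule_lt3. Qed.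

Lemma balanced_rule_of_table t : t \in tables -> balanced (natrule (rule_of_table t)).
Proof.
move=> t_in; have /andP[ht _] := tables_wf t_in.
by rewrite (eq_balanced (natrule_of_table ht)) tables_balanced.
Qed.

(** * Conservation on the simplex *)

Section Conservation.
Variable R : realType.
Local Open Scope ring_scope.
Implicit Types (h : rule) (x y z : 'cV[R]_3) (c : config R).

Lemma local_entry h x y z (m : 'I_3) :
  local h x y z m 0 = \sum_j \sum_k \sum_l x j 0 * y k 0 * z l 0 * (h (j, k, l) == m)%:R.
Proof.
rewrite /local summxE; apply: eq_bigr => j _; rewrite summxE; apply: eq_bigr => k _.
by rewrite summxE; apply: eq_bigr => l _; rewrite !mxE eqxx andbT eq_sym.
Qed.

Definition vertex_flux (H : nat -> nat -> nat -> nat) (m a b : nat) : R :=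
  ((a == m) + (0 == m))%:R - ((H 0 0 a == m) + (H 0 a b == m))%:R.

(* Subtract the balance identities of the cyclic words [k l 0 0 0] and [0 0 0 0 0]
   from that of [j k l 0 0]. *)
Lemma balanced_vertex_flux H (m j k l : nat) : balanced H ->
  (j < 3)%N -> (k < 3)%N -> (l < 3)%N -> (m < 3)%N ->
  (H j k l == m)%:R = (k == m)%:R + vertex_flux H m j k - vertex_flux H m k l :> R.
Proof.
move=> /balancedP hB hj hk hl hm.
have /eqP/(congr1 (fun n : nat => n%:R : R)) := hB j k l m hj hk hl hm.
have /eqP/(congr1 (fun n : nat => n%:R : R)) := hB k l 0 m hk hl isT hm.
have /eqP/(congr1 (fun n : nat => n%:R : R)) := hB 0 0 0 m isT isT isT hm.
rewrite /vertex_flux !natrD => W0 W1 W2.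
lra.
Qed.

Definition flux (H : nat -> nat -> nat -> nat) (m : nat) x y : R :=
  \sum_j \sum_k x j 0 * y k 0 * vertex_flux H m j k.

Lemma local_flux h (m : 'I_3) x y z : balanced (natrule h) -> in_simplex x -> in_simplex z ->
  local h x y z m 0 = y m 0 + flux (natrule h) m x y - flux (natrule h) m y z.
Proof.
move=> hB [sx _] [sz _]; rewrite local_entry.
under eq_bigr do under eq_bigr do under eq_bigr do
  rewrite natrule_eq (balanced_vertex_flux hB) // val_eqE.
by rewrite sum_trilinear_flux // sum_mul_delta.
Qed.

Lemma local_simplex h x y z : in_simplex x -> in_simplex y -> in_simplex z ->
  in_simplex (local h x y z).
Proof.
move=> [sx px] [sy py] [sz pz]; split => [|m]; last first.
  by rewrite local_entry; do 3 apply: sumr_ge0 => ? _; rewrite !mulr_ge0 ?ler0n.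
under eq_bigr do rewrite local_entry.
have -> : \sum_m \sum_j \sum_k \sum_l x j 0 * y k 0 * z l 0 * (h (j, k, l) == m)%:R =
          \sum_j \sum_k \sum_l x j 0 * y k 0 * z l 0.
  rewrite exchange_big; apply: eq_bigr => j _; rewrite exchange_big; apply: eq_bigr => k _.
  rewrite exchange_big; apply: eq_bigr => l _; rewrite -mulr_sumr.
  by under eq_bigr do rewrite eq_sym -[_%:R]mulr1; rewrite sum_delta_mul mulr1.
under eq_bigr do under eq_bigr do rewrite -mulr_sumr sz mulr1.
by under eq_bigr do rewrite -mulr_sumr sy mulr1.
Qed.

Lemma evol_simplex h t c : (forall i, in_simplex (c i)) -> forall i, in_simplex (evol h t c i).
Proof. by move=> hc; elim: t => [|t IH] i //=; apply: local_simplex. Qed.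

Lemma evol_periodic h t c (L : int) : (forall i, c (i + L) = c i) ->
  forall i, evol h t c (i + L) = evol h t c i.
Proof.
move=> hc; elim: t => [|t IH] i //=.
by rewrite /step -addrAC IH IH -[i + L + 1]addrAC IH.
Qed.

Lemma cnc_of_balanced h : balanced (natrule h) -> complete_number_conserving R h.
Proof.
move=> hB m L L_gt0 c c_per c_simplex t.
have d_per := evol_periodic h t c_per; have d_simplex := evol_simplex h t c_simplex.
rewrite [evol h t.+1 c]/=; set d := evol h t c in d_per d_simplex *.
pose F (i : nat) := flux (natrule h) m (d (i%:Z - 1)) (d i).
have stepE (i : nat) : step h d i m 0 = d i m 0 - (F i.+1 - F i).
  have succE : i%:Z + 1 = i.+1 by rewrite -addn1 PoszD.
  by rewrite /step local_flux // /F succE -succE addrK; ring.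
rewrite /nu (eq_bigr _ (fun i _ => stepE i)) sumrB telescope_sumr //.
suff -> : F L.+1 = F 1 by rewrite subrr subr0.
have succE : L.+1%:Z = L%:Z + 1 by rewrite -addn1 PoszD.
by rewrite /F /= succE addrK subrr -(d_per 0) -(d_per 1) add0r addrC.
Qed.

Lemma e_entry (p m : 'I_3) : e R p m 0 = (m == p)%:R.
Proof. by rewrite /e mxE eqxx andbT. Qed.

Lemma e_simplex p : in_simplex (e R p).
Proof.
split=> [|m]; last by rewrite e_entry ler0n.
by under eq_bigr do rewrite e_entry -[_%:R]mulr1; rewrite sum_delta_mul.
Qed.

Lemma local_basis h (p q r m : 'I_3) :
  local h (e R p) (e R q) (e R r) m 0 = (h (p, q, r) == m)%:R.
Proof.
rewrite local_entry.
under eq_bigr do under eq_bigr do under eq_bigr do rewrite !e_entry.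
by rewrite sum3_mul !sum_delta_mul.
Qed.

Lemma local_basis_inord h (a b c m : nat) : (m < 3)%N ->
  local h (e R (inord a)) (e R (inord b)) (e R (inord c)) (inord m) 0 = (natrule h a b c == m)%:R.
Proof.
by move=> hm; rewrite local_basis -val_eqE /= inordK.
Qed.

Lemma e_inord (p m : nat) : (p < 3)%N -> (m < 3)%N -> e R (inord p) (inord m) 0 = (p == m)%:R.
Proof. by move=> hp hm; rewrite e_entry -val_eqE /= !inordK // eq_sym. Qed.

Lemma balanced_of_cnc h : complete_number_conserving R h -> balanced (natrule h).
Proof.
move=> hC; apply/balancedP => a b c m ha hb hc hm.
pose word := [:: a; b; c; 0; 0]%N.
pose cfg : config R := fun i => e R (inord (nth 0%N word (absz (i %% 5)%Z))).
have cfg_per (i : int) : cfg (i + Posz 5) = cfg i by rewrite /cfg modzDr.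
have sum5 (F : nat -> R) : \sum_(1 <= i < 6) F i = F 1%N + F 2%N + F 3%N + F 4%N + F 5%N.
  by rewrite unlock /= addr0 !addrA.
move: (hC (inord m) 5%N isT cfg cfg_per (fun i => e_simplex _) 0%N).
rewrite /nu /evol /= /step !sum5 /cfg /= !local_basis_inord ?e_inord // => E.
rewrite /balanced_at -(eqr_nat R) !natrD; apply/eqP.
lra.
Qed.

Lemma cncP h : complete_number_conserving R h <-> balanced (natrule h).
Proof. by split; [apply: balanced_of_cnc | apply: cnc_of_balanced]. Qed.

Lemma sum_nat3 (F : nat -> R) : \sum_(0 <= j < 3) F j = F 0%N + F 1%N + F 2%N.
Proof. by rewrite unlock /= addr0 addrA. Qed.

Lemma coE x (k : 'I_3) : co x k = x k 0.
Proof. by rewrite /co inord_val. Qed.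

Lemma co_local h x y z m : (m < 3)%N ->
  co (local h x y z) m =
  \sum_(0 <= j < 3) \sum_(0 <= k < 3) \sum_(0 <= l < 3)
     co x j * co y k * co z l * (natrule h j k l == m)%:R.
Proof.
move=> hm; rewrite {1}/co local_entry big_mkord; apply: eq_bigr => j _.
rewrite big_mkord; apply: eq_bigr => k _; rewrite big_mkord; apply: eq_bigr => l _.
by rewrite natrule_eq !coE inordK.
Qed.

Lemma simplex_co x : in_simplex x -> co x 0 = 1 - co x 1 - co x 2.
Proof.
move=> [sx _]; rewrite -sx (eq_bigr (fun k : 'I_3 => co x k)) => [|k _]; last by rewrite coE.
by rewrite -(big_mkord xpredT (co x)) sum_nat3; ring.
Qed.

Lemma col3P (u v : 'cV[R]_3) : (forall m, (m < 3)%N -> co u m = co v m) -> u = v.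
Proof.
move=> E; apply/matrixP => i j; rewrite (ord1 j) -!coE.
exact: E.
Qed.

Lemma co_vec3 (a b c : R) m : (m < 3)%N -> co (vec3 a b c) m = [:: a; b; c]`_m.
Proof. by move=> hm; rewrite /co /vec3 mxE inordK. Qed.

Lemma rule_of_table_listed i : (i < 15)%N -> rule_is (rule_of_table (nth [::] tables i)) (@listed R i).
Proof.
move=> hi x y z hx hy hz; apply: col3P => m hm.
have /andP[ht _] := tables_wf (mem_nth [::] (hi : (i < size tables)%N)).
rewrite co_local // !sum_nat3 !natrule_of_table //.
case: i hi ht => [|[|[|[|[|[|[|[|[|[|[|[|[|[|[|i]]]]]]]]]]]]]]] // _ _;
  case: m hm => [|[|[|m]]] // _; rewrite /listed co_vec3 // /entry /=;
  rewrite (simplex_co hx) (simplex_co hy) (simplex_co hz); ring.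
Qed.

End Conservation.

Theorem mainTheorem4 (R : realType) :
  exists s : seq (rule),
    [/\ size s = 15%N, uniq s,
        (forall h : rule, @complete_number_conserving R h <-> h \in s)
      & (forall i : 'I_15, @rule_is R (nth [ffun _ => ord0] s i) (@listed R i))].
Proof.
exists (map rule_of_table tables); split.
- by rewrite size_map size_tables.
- apply: (@map_uniq _ _ table); rewrite -map_comp (_ : map _ _ = tables) ?uniq_tables //.
  by rewrite -[RHS]map_id; apply/eq_in_map => t /rule_of_tableK.
- move=> h; rewrite cncP; split => [/balanced_table_mem t_in | /mapP[t t_in ->]].
    by rewrite -[h]tableK map_f.
  exact: balanced_rule_of_table.
- move=> i; rewrite (nth_map [::]) ?size_tables //.
  exact: rule_of_table_listed.
Qed.
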